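(* For integers $k\ge1$ and $q\ge2$, \[ \sum_{n=1}^\infty\frac{P_k(H_n,H_n^{(2)},\dots,H_n^{(k)})}{n(n+1)\cdots(n+q-1)}=\frac{1}{(q-1)!}\Big[\zeta(k+1)-\sum_{j=1}^{q-2}\frac{1}{j^{k+1}}\Big]. \]
   Context: For integers $r\ge1$ and $n\ge0$, $H_n^{(r)}=\sum_{j=1}^n j^{-r}$ and $H_n=H_n^{(1)}$. For $n\ge1$, $P_n(y_1,\dots,y_n)=\sum_{m_1+2m_2+\cdots=n}\frac{(-1)^{m_2+m_4+\cdots}}{m_1!m_2!\cdots}\prod_{i\ge1}(y_i/i)^{m_i}$. $\zeta$ is the Riemann zeta function. *)

From Stdlib Require Import Reals List Arith Factorial.
Import ListNotations.
Open Scope R_scope.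

Fixpoint Hr (r n : nat) : R :=
  match n with
  | O => 0
  | S m => Hr r m + / (INR (S m)) ^ r
  end.

Fixpoint vecs (len bound : nat) : list (list nat) :=
  match len with
  | O => [ [] ]
  | S l => flat_map (fun a => map (fun v => a :: v) (vecs l bound)) (seq 0 (S bound))
  end.

(* For a list m = [m_1; ...; m_k] (the entry at position i-1 is m_i):
   weighted size  m_1 + 2 m_2 + ... + k m_k *)
Fixpoint wsize_from (i : nat) (m : list nat) : nat :=
  match m with
  | [] => O
  | a :: t => (i * a + wsize_from (S i) t)%nat
  end.

Fixpoint evensum_from (i : nat) (m : list nat) : nat :=
  match m with
  | [] => O
  | a :: t => ((if Nat.even i then a else O) + evensum_from (S i) t)%nat
  end.

Fixpoint prodterm_from (i : nat) (y : nat -> R) (m : list nat) : R :=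
  match m with
  | [] => 1
  | a :: t => (y i / INR i) ^ a / INR (fact a) * prodterm_from (S i) y t
  end.

(* The partitions of n, encoded as multiplicity vectors (m_1,...,m_n)
   with m_1 + 2 m_2 + ... + n m_n = n (multiplicities m_i with i > n vanish). *)
Definition partitions (n : nat) : list (list nat) :=
  filter (fun m => Nat.eqb (wsize_from 1 m) n) (vecs n n).

(* P_n(y_1,...,y_n) = sum_{m_1+2m_2+...=n} (-1)^{m_2+m_4+...}/(m_1! m_2! ...)
                        prod_i (y_i/i)^{m_i}.
   The variables are given as a function y : nat -> R, y i = y_i. *)
Definition Ppoly (n : nat) (y : nat -> R) : R :=
  fold_right Rplus 0
    (map (fun m => (-1) ^ (evensum_from 1 m) * prodterm_from 1 y m) (partitions n)).

Fixpoint rising (n q : nat) : R :=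
  match q with
  | O => 1
  | S p => rising n p * INR (n + p)
  end.

(* Evaluated at the power sums H_n^(r) of 1, 1/2, ..., 1/n, P_k is the elementary
   symmetric polynomial e_k(n) of these numbers, because both satisfy Newton's identities.
   Summation by parts against 1/(n+1)_p - 1/(n+2)_p = p/(n+1)_(p+1), where (m)_p is the
   rising product, gives sum_(n>=0) e_k(n)/(n+1)_(p+1) = 1/(p! p^(k+1)) by induction on k;
   the boundary terms vanish because e_k(n) = O(sqrt n).  Writing A_q for the series of the
   theorem, the splitting 1/(n)_q = q/(n)_(q+1) + 1/(n+1)_q then yields
   (q-1)! A_q = q! A_(q+1) + 1/(q-1)^(k+1), and since q! A_(q+1) = O(1/q), telescoping gives
   (q-1)! A_q = sum_(j>=q-1) 1/j^(k+1). *)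

From Stdlib Require Import Reals Arith Factorial List Lia Lra.
From Coquelicot Require Import Coquelicot.
Open Scope R_scope.

Fixpoint rsum (f : nat -> R) (n : nat) : R :=
  match n with O => 0 | S m => rsum f m + f m end.

Lemma rsum_ext f g n : (forall a, (a < n)%nat -> f a = g a) -> rsum f n = rsum g n.
Proof.
  induction n as [|n IH]; intros Hfg; cbn [rsum]; [easy|].
  rewrite IH by (intros; apply Hfg; lia); now rewrite Hfg by lia.
Qed.

Lemma rsum_plus f g n : rsum (fun a => f a + g a) n = rsum f n + rsum g n.
Proof. induction n as [|n IH]; cbn [rsum]; [ring|rewrite IH; ring]. Qed.

Lemma rsum_scal c f n : rsum (fun a => c * f a) n = c * rsum f n.
Proof. induction n as [|n IH]; cbn [rsum]; [ring|rewrite IH; ring]. Qed.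

Lemma rsum_eq0 f n : (forall a, (a < n)%nat -> f a = 0) -> rsum f n = 0.
Proof.
  induction n as [|n IH]; intros Hf; cbn [rsum]; [easy|].
  rewrite IH by (intros; apply Hf; lia); rewrite Hf by lia; ring.
Qed.

Lemma rsum_Sl f n : rsum f (S n) = f O + rsum (fun a => f (S a)) n.
Proof. induction n as [|n IH]; cbn [rsum] in *; [ring|rewrite IH; ring]. Qed.

Lemma rsum_trunc f m n : (m <= n)%nat ->
  (forall a, (m <= a < n)%nat -> f a = 0) -> rsum f n = rsum f m.
Proof.
  intros Hmn Hf; induction n as [|n IH].
  - now replace m with O by lia.
  - destruct (Nat.eq_dec m (S n)) as [->|Hm]; [easy|].
    cbn [rsum]; rewrite IH by (lia || (intros; apply Hf; lia)); rewrite Hf by lia; ring.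
Qed.

Lemma rsum_swap (F : nat -> nat -> R) n m :
  rsum (fun a => rsum (F a) m) n = rsum (fun b => rsum (fun a => F a b) n) m.
Proof.
  induction n as [|n IH]; cbn [rsum].
  - symmetry; now apply rsum_eq0.
  - now rewrite IH, <- rsum_plus.
Qed.

Lemma rsum_by_parts (f g : nat -> R) N :
  rsum (fun n => f n * (g n - g (S n))) (S N) =
  f O * g O + rsum (fun n => (f (S n) - f n) * g (S n)) N - f N * g (S N).
Proof. induction N as [|N IH]; cbn [rsum] in *; [ring|rewrite IH; ring]. Qed.

Lemma is_series_rsum (a : nat -> R) (l : R) : is_series a l <-> is_lim_seq (rsum a) l.
Proof.
  assert (Hpart : forall N, sum_f_R0 a N = rsum a (S N)).
  { induction N as [|N IH]; cbn [sum_f_R0 rsum] in *; [ring|now rewrite IH]. }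
  rewrite is_series_Reals, is_lim_seq_incr_1, is_lim_seq_Reals.
  split; apply Un_cv_ext; intros N; now rewrite Hpart.
Qed.

Definition sumL {A} (f : A -> R) (l : list A) : R := fold_right Rplus 0 (map f l).

Lemma sumL_app {A} (f : A -> R) l1 l2 : sumL f (l1 ++ l2) = sumL f l1 + sumL f l2.
Proof. unfold sumL; induction l1 as [|x l1 IH]; cbn [app map fold_right]; [ring|rewrite IH; ring]. Qed.

Lemma sumL_flat_map {A B} (f : B -> R) (h : A -> list B) l :
  sumL f (flat_map h l) = sumL (fun a => sumL f (h a)) l.
Proof. induction l as [|x l IH]; cbn [flat_map]; [easy|]. now rewrite sumL_app, IH. Qed.

Lemma sumL_map {A B} (f : B -> R) (h : A -> B) l : sumL f (map h l) = sumL (fun x => f (h x)) l.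
Proof. unfold sumL; now rewrite map_map. Qed.

Lemma sumL_ext {A} (f g : A -> R) l : (forall x, f x = g x) -> sumL f l = sumL g l.
Proof. intros Hfg; unfold sumL; now rewrite (map_ext f g). Qed.

Lemma sumL_scal {A} c (f : A -> R) l : sumL (fun x => c * f x) l = c * sumL f l.
Proof. unfold sumL; induction l as [|x l IH]; cbn [map fold_right]; [ring|rewrite IH; ring]. Qed.

Lemma sumL_eq0 {A} (f : A -> R) l : (forall x, f x = 0) -> sumL f l = 0.
Proof. intros Hf; unfold sumL; induction l as [|x l IH]; cbn [map fold_right]; [easy|rewrite IH, Hf; ring]. Qed.

Lemma sumL_filter {A} (f : A -> R) p l :
  sumL f (filter p l) = sumL (fun x => if p x then f x else 0) l.
Proof.
  unfold sumL; induction l as [|x l IH]; cbn [filter map fold_right]; [easy|].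
  destruct (p x); cbn [map fold_right]; rewrite IH; [easy|ring].
Qed.

Lemma sumL_seq f s n : sumL f (seq s n) = rsum (fun a => f (s + a)%nat) n.
Proof.
  revert s; induction n as [|n IH]; intros s; [easy|].
  rewrite rsum_Sl; cbn [seq]; unfold sumL; cbn [map fold_right]; fold (sumL f (seq (S s) n)).
  rewrite IH, Nat.add_0_r; f_equal; apply rsum_ext; intros; f_equal; lia.
Qed.

Section Partitions.

Variable y : nat -> R.

Definition mweight (i a : nat) : R :=
  (-1) ^ (if Nat.even i then a else O) * ((y i / INR i) ^ a / INR (fact a)).

Definition vweight (i : nat) (m : list nat) : R :=
  (-1) ^ (evensum_from i m) * prodterm_from i y m.

Lemma vweight_cons i a m : vweight i (a :: m) = mweight i a * vweight (S i) m.
Proof. unfold vweight, mweight; cbn [evensum_from prodterm_from]; rewrite pow_add; ring. Qed.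

(* [partsum l i n] sums the weights of the multiplicity vectors (m_i, ..., m_(i+l-1))
   with i m_i + ... + (i+l-1) m_(i+l-1) = n; the recursion peels off m_i = a. *)
Fixpoint partsum (l i n : nat) : R :=
  match l with
  | O => if Nat.eqb n 0 then 1 else 0
  | S l' => rsum (fun a => if Nat.leb (i * a) n
                           then mweight i a * partsum l' (S i) (n - i * a) else 0) (S n)
  end.

Lemma vecs_partsum l : forall i b n, (1 <= i)%nat -> (n <= b)%nat ->
  sumL (fun m => if Nat.eqb (wsize_from i m) n then vweight i m else 0) (vecs l b) =
  partsum l i n.
Proof.
  induction l as [|l IH]; intros i b n Hi Hb.
  - cbn; unfold vweight; cbn; destruct n; cbn; ring.
  - cbn [vecs partsum]; rewrite sumL_flat_map, sumL_seq.
    rewrite (rsum_trunc _ (S n) (S b)) by (lia || (intros a Ha;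
      rewrite sumL_map; apply sumL_eq0; intros v; cbn [wsize_from Nat.add];
      destruct (Nat.eqb_spec (i * a + wsize_from (S i) v) n); [nia|easy])).
    apply rsum_ext; intros a _; rewrite sumL_map; cbn [Nat.add].
    destruct (Nat.leb_spec (i * a) n).
    + rewrite <- (IH (S i) b), <- sumL_scal by lia; apply sumL_ext; intros v.
      cbn [wsize_from]; rewrite vweight_cons.
      destruct (Nat.eqb_spec (i * a + wsize_from (S i) v) n);
        destruct (Nat.eqb_spec (wsize_from (S i) v) (n - i * a)); try lia; ring.
    + apply sumL_eq0; intros v; cbn [wsize_from].
      destruct (Nat.eqb_spec (i * a + wsize_from (S i) v) n); [lia|easy].
Qed.

Lemma Ppoly_partsum n : Ppoly n y = partsum n 1 n.
Proof.
  rewrite <- (vecs_partsum n 1 n) by lia.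
  exact (sumL_filter _ _ _).
Qed.

Definition nsign (j : nat) : R := if Nat.even j then -1 else 1.

Lemma mweight_0 i : mweight i 0 = 1.
Proof. unfold mweight; destruct (Nat.even i); cbn; field. Qed.

Lemma mweight_succ i a : (1 <= i)%nat ->
  mweight i (S a) * INR (i * S a) = nsign i * y i * mweight i a.
Proof.
  intros Hi; unfold mweight, nsign.
  assert (INR i <> 0) by (apply not_0_INR; lia).
  assert (INR (fact a) <> 0) by apply INR_fact_neq_0.
  assert (INR (S a) <> 0) by (apply not_0_INR; lia).
  rewrite mult_INR; change (fact (S a)) with (S a * fact a)%nat; rewrite mult_INR.
  destruct (Nat.even i); cbn; field; auto.
Qed.

Lemma partsum_S_widen l i m n : (1 <= i)%nat -> (m <= n)%nat ->
  partsum (S l) i m =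
  rsum (fun a => if Nat.leb (i * a) m then mweight i a * partsum l (S i) (m - i * a) else 0) (S n).
Proof.
  intros Hi Hmn; cbn [partsum]; symmetry; apply rsum_trunc; [lia|].
  intros a Ha; destruct (Nat.leb_spec (i * a) m); [nia|easy].
Qed.

Lemma partsum_small l : forall i n, (n < i)%nat -> partsum l i n = if Nat.eqb n 0 then 1 else 0.
Proof.
  induction l as [|l IH]; intros i n Hn; [easy|].
  cbn [partsum]; rewrite rsum_Sl, rsum_eq0.
  - rewrite Nat.mul_0_r, Nat.sub_0_r, mweight_0, IH by lia; cbn [Nat.leb]; ring.
  - intros a _; destruct (Nat.leb_spec (i * S a) n); [nia|easy].
Qed.

(* Part sizes beyond n do not contribute. *)
Lemma partsum_len l l' : forall i n, (n < i + l)%nat -> (n < i + l')%nat ->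
  partsum l i n = partsum l' i n.
Proof.
  revert l'; induction l as [|l IH]; intros l' i n H1 H2.
  - now rewrite !partsum_small by lia.
  - destruct l' as [|l']; [now rewrite !partsum_small by lia|].
    cbn [partsum]; apply rsum_ext; intros a _.
    destruct (Nat.leb_spec (i * a) n); [rewrite (IH l'); lia || easy|easy].
Qed.

(* The occurrences of the smallest part i account for the [d = 0] term of Newton's identity. *)
Lemma partsum_head l i n : (1 <= i)%nat ->
  rsum (fun a => if Nat.leb (i * a) n
                 then mweight i a * INR (i * a) * partsum l (S i) (n - i * a) else 0) (S n) =
  if Nat.leb i n then nsign i * y i * partsum (S l) i (n - i) else 0.
Proof.
  intros Hi; rewrite rsum_Sl, Nat.mul_0_r; cbn [Nat.leb INR]; rewrite Rmult_0_r, Rmult_0_l, Rplus_0_l.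
  destruct (Nat.leb_spec i n).
  - rewrite (partsum_S_widen l i (n - i) (n - 1)) by lia.
    replace n with (S (n - 1)) at 1 by lia; rewrite <- rsum_scal; apply rsum_ext; intros a _.
    replace (n - i * S a)%nat with (n - i - i * a)%nat by nia.
    destruct (Nat.leb_spec (i * S a) n), (Nat.leb_spec (i * a) (n - i)); try nia; [|ring].
    rewrite mweight_succ by easy; ring.
  - apply rsum_eq0; intros a _; destruct (Nat.leb_spec (i * S a) n); [nia|easy].
Qed.

Lemma partsum_newton l : forall i n, (1 <= i)%nat ->
  INR n * partsum l i n =
  rsum (fun d => if Nat.leb (i + d) n
                 then nsign (i + d) * y (i + d) * partsum l i (n - (i + d)) else 0) l.
Proof.
  induction l as [|l IH]; intros i n Hi.
  - destruct n; cbn; ring.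
  - assert (Hsplit : INR n * partsum (S l) i n =
      rsum (fun a => if Nat.leb (i * a) n
                     then mweight i a * INR (i * a) * partsum l (S i) (n - i * a) else 0) (S n) +
      rsum (fun a => if Nat.leb (i * a) n
                     then mweight i a * (INR (n - i * a) * partsum l (S i) (n - i * a)) else 0) (S n)).
    { cbn [partsum]; rewrite <- rsum_plus, <- rsum_scal; apply rsum_ext; intros a _.
      destruct (Nat.leb_spec (i * a) n); [|ring].
      rewrite <- (Nat.sub_add (i * a) n) at 1 by easy; rewrite plus_INR; ring. }
    rewrite Hsplit, partsum_head, (rsum_Sl _ l), Nat.add_0_r by easy; f_equal.
    rewrite (rsum_ext _ (fun a => rsum (fun d =>
      if Nat.leb (i * a + (S i + d)) n
      then mweight i a * (nsign (S i + d) * y (S i + d) *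
             partsum l (S i) (n - i * a - (S i + d))) else 0) l)).
    2:{ intros a _; destruct (Nat.leb_spec (i * a) n).
        - rewrite IH, <- rsum_scal by lia; apply rsum_ext; intros d _.
          destruct (Nat.leb_spec (S i + d) (n - i * a)), (Nat.leb_spec (i * a + (S i + d)) n);
            try lia; ring.
        - symmetry; apply rsum_eq0; intros d _.
          destruct (Nat.leb_spec (i * a + (S i + d)) n); [lia|easy]. }
    rewrite rsum_swap; apply rsum_ext; intros d _.
    replace (i + S d)%nat with (S i + d)%nat by lia.
    destruct (Nat.leb_spec (S i + d) n).
    + rewrite (partsum_S_widen l i (n - (S i + d)) n), <- rsum_scal by lia.
      apply rsum_ext; intros a _.
      replace (n - (S i + d) - i * a)%nat with (n - i * a - (S i + d))%nat by lia.
      destruct (Nat.leb_spec (i * a) (n - (S i + d))),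
        (Nat.leb_spec (i * a + (S i + d)) n); try lia; ring.
    + apply rsum_eq0; intros a _; destruct (Nat.leb_spec (i * a + (S i + d)) n); [lia|easy].
Qed.

Lemma Ppoly_newton k : (1 <= k)%nat ->
  INR k * Ppoly k y = rsum (fun d => nsign (S d) * y (S d) * Ppoly (k - S d) y) k.
Proof.
  intros Hk; rewrite Ppoly_partsum, partsum_newton by lia; apply rsum_ext; intros d Hd.
  rewrite Ppoly_partsum; destruct (Nat.leb_spec (1 + d) k); [|lia].
  now rewrite (partsum_len k (k - S d)) by lia.
Qed.

End Partitions.

Lemma rsum_telescope (u : nat -> R) n : rsum (fun d => u d - u (S d)) n = u O - u n.
Proof. induction n as [|n IH]; cbn [rsum]; [ring|rewrite IH; ring]. Qed.

(* [esym k n] is the elementary symmetric polynomial e_k(1, 1/2, ..., 1/n). *)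
Fixpoint esym (k n : nat) : R :=
  match n with
  | O => match k with O => 1 | S _ => 0 end
  | S m => esym k m + match k with O => 0 | S j => esym j m / INR (S m) end
  end.

Lemma esym_0_l n : esym 0 n = 1.
Proof. induction n as [|n IH]; cbn [esym]; [easy|rewrite IH; ring]. Qed.

Lemma esym_nonneg k n : 0 <= esym k n.
Proof.
  revert k; induction n as [|n IH]; intros k; cbn [esym]; [destruct k; lra|].
  destruct k as [|k]; [specialize (IH O); lra|].
  assert (0 <= esym k n / INR (S n)) by (apply Rdiv_le_0_compat; [easy|apply lt_0_INR; lia]).
  specialize (IH (S k)); lra.
Qed.

Lemma nsign_SS d : nsign (S (S d)) = - nsign (S d).
Proof.
  unfold nsign; change (Nat.even (S (S d))) with (Nat.even d).
  rewrite Nat.even_succ, <- Nat.negb_even; destruct (Nat.even d); cbn; ring.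
Qed.

Lemma esym_newton n : forall k, (1 <= k)%nat ->
  INR k * esym k n = rsum (fun d => nsign (S d) * Hr (S d) n * esym (k - S d) n) k.
Proof.
  induction n as [|n IH]; intros k Hk.
  - destruct k as [|k]; [lia|]; cbn [esym]; rewrite Rmult_0_r.
    symmetry; apply rsum_eq0; intros; cbn [Hr]; ring.
  - destruct k as [|k]; [lia|].
    set (x := / INR (S n)).
    set (new m := match m with O => 0 | S j => x * esym j n end).
    assert (Hesym : forall m, esym m (S n) = esym m n + new m).
    { intros [|m]; cbn [esym new]; unfold x, Rdiv; ring. }
    assert (Hpow : forall j, Hr j (S n) = Hr j n + x ^ j).
    { intros j; cbn [Hr]; unfold x; now rewrite pow_inv. }
    assert (Hmixed : rsum (fun d => nsign (S d) * Hr (S d) n * new (k - d)%nat) (S k) =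
                     x * (INR k * esym k n)).
    { destruct k as [|k]; [cbn; ring|].
      rewrite IH, <- rsum_scal by lia.
      rewrite (rsum_trunc _ (S k)) by (lia || (intros d Hd;
        replace (S k - d)%nat with O by lia; cbn [new]; ring)).
      apply rsum_ext; intros d Hd.
      replace (S k - d)%nat with (S (S k - S d)) by lia; cbn [new]; ring. }
    assert (Htelescope : rsum (fun d => nsign (S d) * x ^ S d * (esym (k - d) n + new (k - d)%nat)) (S k) =
                         x * esym k n).
    { set (t d := nsign (S d) * x ^ S d * esym (k - d) n).
      cbn [rsum]; rewrite (rsum_ext _ (fun d => t d - t (S d))), rsum_telescope.
      - unfold t, nsign; rewrite Nat.sub_diag, Nat.sub_0_r; cbn [new pow Nat.even]; ring.
      - intros d Hd; unfold t; replace (k - d)%nat with (S (k - S d)) by lia.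
        cbn [new pow]; rewrite nsign_SS; ring. }
    rewrite (rsum_ext _ (fun d => nsign (S d) * Hr (S d) n * esym (S k - S d) n +
      nsign (S d) * Hr (S d) n * new (k - d)%nat +
      nsign (S d) * x ^ S d * (esym (k - d) n + new (k - d)%nat))).
    2:{ intros d _; cbn [Nat.sub]; rewrite Hesym, Hpow; ring. }
    rewrite !rsum_plus, <- IH, Hmixed, Htelescope, Hesym by lia.
    cbn [new]; rewrite S_INR; ring.
Qed.

Lemma Ppoly_esym k n : Ppoly k (fun r => Hr r n) = esym k n.
Proof.
  induction k as [k IH] using lt_wf_ind; destruct k as [|k].
  - rewrite esym_0_l; cbn; ring.
  - apply (Rmult_eq_reg_l (INR (S k))); [|apply not_0_INR; lia].
    rewrite Ppoly_newton, esym_newton by lia; apply rsum_ext; intros d Hd.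
    rewrite IH by lia; easy.
Qed.

(* sqrt (x + 2) - sqrt (x + 1) = 1 / (sqrt (x + 2) + sqrt (x + 1)) >= 1 / (4 sqrt (x + 1)). *)
Lemma sqrt_succ_gap x : 0 <= x -> sqrt (x + 1) + / (4 * sqrt (x + 1)) <= sqrt (x + 2).
Proof.
  intros Hx; set (s := sqrt (x + 1)).
  assert (Hs : 1 <= s) by (unfold s; rewrite <- sqrt_1 at 1; apply sqrt_le_1_alt; lra).
  assert (Hs2 : s * s = x + 1) by (unfold s; apply sqrt_sqrt; lra).
  apply Rsqr_incr_0_var; [|apply sqrt_pos].
  rewrite Rsqr_sqrt by lra; unfold Rsqr.
  replace ((s + / (4 * s)) * (s + / (4 * s))) with (s * s + / 2 + / (16 * (s * s))) by (field; lra).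
  assert (/ (16 * (s * s)) <= / 2) by (apply Rinv_le_contravar; nra).
  lra.
Qed.

Lemma esym_le_sqrt k n : esym k n <= 4 ^ k * sqrt (INR n + 1).
Proof.
  revert n; induction k as [|k IHk]; intros n.
  - rewrite esym_0_l, pow_O, Rmult_1_l, <- sqrt_1 at 1; apply sqrt_le_1_alt.
    pose proof (pos_INR n); lra.
  - assert (H4 : 0 < 4 ^ k) by (apply pow_lt; lra).
    induction n as [|n IHn]; cbn [esym]; [apply Rmult_le_pos; [apply pow_le; lra|apply sqrt_pos]|].
    pose proof (pos_INR n) as Hn.
    set (s := sqrt (INR n + 1)) in *.
    assert (Hs : 0 < s) by (apply sqrt_lt_R0; lra).
    assert (Hs2 : s * s = INR n + 1) by (apply sqrt_sqrt; lra).
    assert (Hnew : esym k n / INR (S n) <= 4 ^ k * / s).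
    { rewrite S_INR, <- Hs2; apply Rmult_le_reg_r with (s * s); [nra|].
      unfold Rdiv; rewrite Rmult_assoc, Rinv_l by nra.
      replace (4 ^ k * / s * (s * s)) with (4 ^ k * s) by (field; lra).
      pose proof (IHk n) as Hk; fold s in Hk; lra. }
    pose proof (sqrt_succ_gap (INR n) Hn) as Hgap.
    rewrite S_INR in Hnew |- *; replace (INR n + 1 + 1) with (INR n + 2) by ring; fold s in Hgap.
    cbn [pow] in IHn |- *; replace (4 ^ k * / s) with (4 * 4 ^ k * / (4 * s)) in Hnew by (field; lra).
    apply Rle_trans with (4 * 4 ^ k * (s + / (4 * s))); [rewrite Rmult_plus_distr_l; lra|].
    apply Rmult_le_compat_l; lra.
Qed.

Lemma rising_pos m q : (1 <= m)%nat -> 0 < rising m q.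
Proof.
  intros Hm; induction q as [|q IH]; cbn [rising]; [lra|].
  apply Rmult_lt_0_compat; [easy|apply lt_0_INR; lia].
Qed.

Lemma rising_S m p : rising m (S p) = INR m * rising (S m) p.
Proof.
  induction p as [|p IH]; cbn [rising] in *; [rewrite Nat.add_0_r; ring|].
  rewrite IH; replace (S m + p)%nat with (m + S p)%nat by lia; ring.
Qed.

Lemma rising_1 p : rising 1 p = INR (fact p).
Proof.
  induction p as [|p IH]; [easy|].
  cbn [rising fact]; rewrite IH, mult_INR; cbn [Nat.add]; ring.
Qed.

Lemma rising_inv_diff m p : (1 <= m)%nat ->
  / rising m p - / rising (S m) p = INR p / rising m (S p).
Proof.
  intros Hm.
  pose proof (rising_pos m p Hm); pose proof (rising_pos (S m) p ltac:(lia)).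
  assert (0 < INR m) by (apply lt_0_INR; lia).
  assert (Hprod : rising m p * (INR m + INR p) = INR m * rising (S m) p).
  { rewrite <- plus_INR, <- rising_S; reflexivity. }
  replace (/ rising m p) with ((INR m + INR p) / (INR m * rising (S m) p))
    by (rewrite <- Hprod; field; pose proof (pos_INR p); split; lra).
  rewrite rising_S; field; lra.
Qed.

Lemma rising_ge m p : (1 <= m)%nat -> (1 <= p)%nat -> INR m <= rising m p.
Proof.
  intros Hm Hp; destruct p as [|p]; [lia|]; rewrite rising_S.
  assert (1 <= rising (S m) p).
  { clear Hp; induction p as [|p IH]; cbn [rising]; [lra|].
    assert (1 <= INR (S m + p)) by (apply (le_INR 1); lia); nra. }
  pose proof (pos_INR m); nra.
Qed.

Lemma rising_succ_le m q : (1 <= m)%nat -> rising (S m) q <= (INR q + 1) * rising m q.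
Proof.
  intros Hm.
  assert (Hprod : INR m * rising (S m) q = rising m q * (INR m + INR q)).
  { rewrite <- plus_INR, <- rising_S; reflexivity. }
  pose proof (rising_pos m q Hm); pose proof (pos_INR q).
  assert (1 <= INR m) by (apply (le_INR 1); lia).
  assert (0 <= INR q * rising m q * (INR m - 1)) by (repeat apply Rmult_le_pos; lra).
  apply Rmult_le_reg_l with (INR m); [lra|]; rewrite Hprod; nra.
Qed.

Lemma rising_fact_le m q : (1 <= m)%nat -> (2 <= q)%nat ->
  INR (fact q) * rising m 2 <= 2 * rising m q.
Proof.
  intros Hm Hq; induction q as [|q IH]; [lia|].
  destruct (Nat.eq_dec q 1) as [->|Hq1]; [cbn; lra|].
  specialize (IH ltac:(lia)); cbn [fact rising]; rewrite mult_INR.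
  assert (INR (S q) <= INR (m + q)) by (apply le_INR; lia).
  assert (0 <= INR (fact q) * rising m 2)
    by (apply Rmult_le_pos; [apply pos_INR|apply Rlt_le, rising_pos; easy]).
  pose proof (pos_INR (S q)); cbn [rising] in *; nra.
Qed.

Lemma is_lim_seq_inv_INR_S : is_lim_seq (fun N => / INR (S N)) 0.
Proof.
  apply (is_lim_seq_incr_1 (fun N => / INR N)).
  replace (Finite 0) with (Rbar_inv p_infty) by easy.
  apply is_lim_seq_inv; [apply is_lim_seq_INR|easy].
Qed.

(* The growth bound makes the boundary term of the summation by parts vanish. *)
Lemma esym_rising_boundary k p : (1 <= p)%nat ->
  is_lim_seq (fun N => esym k N / rising (S (S N)) p) 0.
Proof.
  intros Hp.
  apply is_lim_seq_le_le with (fun _ => 0) (fun N => 4 ^ k * sqrt (/ INR (S N))).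
  2: apply is_lim_seq_const.
  2:{ replace 0 with (4 ^ k * sqrt 0) by (rewrite sqrt_0; ring).
      apply is_lim_seq_mult'; [apply is_lim_seq_const|].
      apply (is_lim_seq_continuous sqrt); [apply continuity_pt_sqrt; lra|].
      apply is_lim_seq_inv_INR_S. }
  intros N; pose proof (esym_nonneg k N); pose proof (esym_le_sqrt k N) as Hle.
  assert (HN : 0 < INR (S N)) by (apply lt_0_INR; lia).
  assert (INR (S N) <= rising (S (S N)) p)
    by (apply Rle_trans with (INR (S (S N))); [apply le_INR; lia|apply rising_ge; lia]).
  pose proof (rising_pos (S (S N)) p ltac:(lia)).
  split; [apply Rdiv_le_0_compat; lra|].
  rewrite sqrt_inv, <- S_INR in *.
  pose proof (sqrt_lt_R0 _ HN) as Hs; pose proof (sqrt_sqrt _ (Rlt_le _ _ HN)) as Hs2.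
  apply Rle_trans with (esym k N / INR (S N)).
  - apply Rmult_le_compat_l; [easy|apply Rinv_le_contravar; lra].
  - apply Rmult_le_reg_r with (INR (S N)); [easy|].
    unfold Rdiv; rewrite Rmult_assoc, Rinv_l by lra.
    rewrite <- Hs2 at 2; replace (4 ^ k * / sqrt (INR (S N)) * (sqrt (INR (S N)) * sqrt (INR (S N))))
      with (4 ^ k * sqrt (INR (S N))) by (field; lra); lra.
Qed.

Lemma esym_rising_partial k p N : (1 <= p)%nat ->
  INR p * rsum (fun n => esym k n / rising (S n) (S p)) (S N) =
  match k with
  | O => / INR (fact p)
  | S j => rsum (fun n => esym j n / rising (S n) (S p)) N
  end - esym k N / rising (S (S N)) p.
Proof.
  intros Hp; rewrite <- rsum_scal.
  rewrite (rsum_ext _ (fun n => esym k n * (/ rising (S n) p - / rising (S (S n)) p)))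
    by (intros n _; rewrite rising_inv_diff by lia; unfold Rdiv; ring).
  rewrite rsum_by_parts, rising_1; unfold Rdiv.
  destruct k as [|j]; cbn [esym].
  - rewrite rsum_eq0 by (intros n _; rewrite !esym_0_l; ring); ring.
  - rewrite (rsum_ext _ (fun n => esym j n * / rising (S n) (S p))); [ring|].
    intros n _; rewrite (rising_S (S n)).
    pose proof (rising_pos (S (S n)) p ltac:(lia)).
    assert (0 < INR (S n)) by (apply lt_0_INR; lia).
    field; lra.
Qed.

Lemma is_series_esym_rising k p : (1 <= p)%nat ->
  is_series (fun n => esym k n / rising (S n) (S p)) (/ (INR (fact p) * INR p ^ S k)).
Proof.
  intros Hp; rewrite is_series_rsum.
  assert (0 < INR p) by (apply lt_0_INR; lia).
  pose proof (INR_fact_lt_0 p).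
  induction k as [|k IH]; apply is_lim_seq_incr_1.
  - apply (is_lim_seq_ext (fun N => (/ INR (fact p) - esym 0 N / rising (S (S N)) p) * / INR p)).
    { intros N; rewrite <- (esym_rising_partial 0 p N Hp); field; lra. }
    replace (/ (INR (fact p) * INR p ^ 1)) with ((/ INR (fact p) - 0) * / INR p) by (field; lra).
    apply is_lim_seq_mult'; [|apply is_lim_seq_const].
    apply is_lim_seq_minus'; [apply is_lim_seq_const|apply esym_rising_boundary, Hp].
  - apply (is_lim_seq_ext (fun N =>
      (rsum (fun n => esym k n / rising (S n) (S p)) N - esym (S k) N / rising (S (S N)) p) * / INR p)).
    { intros N; rewrite <- (esym_rising_partial (S k) p N Hp); field; lra. }
    replace (/ (INR (fact p) * INR p ^ S (S k))) with ((/ (INR (fact p) * INR p ^ S k) - 0) * / INR p)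
      by (cbn [pow]; field; split; [apply pow_nonzero|]; lra).
    apply is_lim_seq_mult'; [|apply is_lim_seq_const].
    apply is_lim_seq_minus'; [apply IH|apply esym_rising_boundary, Hp].
Qed.

Lemma ex_series_esym_rising k p : (1 <= p)%nat ->
  ex_series (fun n => esym k (S n) / rising (S n) (S p)).
Proof.
  intros Hp.
  apply (@ex_series_le R_AbsRing R_CompleteNormedModule _ (fun n => (INR (S p) + 1) * (esym k (S n) / rising (S (S n)) (S p)))).
  - intros n; pose proof (esym_nonneg k (S n)).
    pose proof (rising_pos (S n) (S p) ltac:(lia)); pose proof (rising_pos (S (S n)) (S p) ltac:(lia)).
    pose proof (rising_succ_le (S n) (S p) ltac:(lia)).
    rewrite Rabs_pos_eq by (apply Rdiv_le_0_compat; lra).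
    unfold Rdiv; rewrite <- Rmult_assoc, (Rmult_comm _ (esym _ _)), Rmult_assoc.
    apply Rmult_le_compat_l; [easy|].
    apply Rmult_le_reg_l with (rising (S n) (S p) * rising (S (S n)) (S p)); [nra|].
    replace (rising (S n) (S p) * rising (S (S n)) (S p) * / rising (S n) (S p))
      with (rising (S (S n)) (S p)) by (field; lra).
    replace (rising (S n) (S p) * rising (S (S n)) (S p) * ((INR (S p) + 1) * / rising (S (S n)) (S p)))
      with ((INR (S p) + 1) * rising (S n) (S p)) by (field; lra).
    easy.
  - apply (ex_series_scal_l (V := R_NormedModule) (INR (S p) + 1)).
    apply (ex_series_incr_1 (fun n => esym k n / rising (S n) (S p))).
    eexists; apply is_series_esym_rising, Hp.
Qed.

Lemma Series_nonneg (a : nat -> R) : (forall n, 0 <= a n) -> ex_series a -> 0 <= Series a.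
Proof.
  intros Ha Hex.
  replace 0 with (Series (fun n => 0 * a n)) by (rewrite Series_scal_l; ring).
  apply Series_le; [intros n; specialize (Ha n); split; lra|easy].
Qed.

Definition esym_series (k q : nat) : R := Series (fun n => esym k (S n) / rising (S n) q).

Lemma esym_series_rec k p : (1 <= k)%nat -> (1 <= p)%nat ->
  esym_series k (S p) = INR (S p) * esym_series k (S (S p)) + / (INR (fact p) * INR p ^ S k).
Proof.
  intros Hk Hp; unfold esym_series.
  rewrite (Series_ext _ (fun n => INR (S p) * (esym k (S n) / rising (S n) (S (S p))) +
                                  esym k (S n) / rising (S (S n)) (S p))).
  2:{ intros n; pose proof (rising_inv_diff (S n) (S p) ltac:(lia)) as Hdiff.
      unfold Rdiv in *; replace (/ rising (S n) (S p)) with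
        (INR (S p) * / rising (S n) (S (S p)) + / rising (S (S n)) (S p)) by lra.
      ring. }
  rewrite Series_plus, Series_scal_l.
  - rewrite <- (Series_incr_1_aux (fun n => esym k n / rising (S n) (S p)))
      by (destruct k; [lia|cbn; unfold Rdiv; ring]).
    now rewrite (is_series_unique _ _ (is_series_esym_rising k p Hp)).
  - apply (ex_series_scal_l (V := R_NormedModule)), ex_series_esym_rising; lia.
  - apply (ex_series_incr_1 (fun n => esym k n / rising (S n) (S p))).
    eexists; apply is_series_esym_rising, Hp.
Qed.

(* [scaled_series k p] is (q-1)! times the series of the theorem, for q = p + 1. *)
Definition scaled_series (k p : nat) : R := INR (fact p) * esym_series k (S p).

Lemma scaled_series_rec k p : (1 <= k)%nat -> (1 <= p)%nat ->
  scaled_series k p = scaled_series k (S p) + / INR p ^ S k.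
Proof.
  intros Hk Hp; unfold scaled_series; rewrite esym_series_rec by easy.
  cbn [fact]; rewrite mult_INR.
  assert (0 < INR p) by (apply lt_0_INR; lia); pose proof (INR_fact_lt_0 p).
  field; split; [apply pow_nonzero|]; lra.
Qed.

Lemma scaled_series_bound k p : (1 <= p)%nat ->
  0 <= scaled_series k p <= 2 * esym_series k 2 * / INR (S p).
Proof.
  intros Hp; unfold scaled_series, esym_series.
  replace (2 * Series (fun n => esym k (S n) / rising (S n) 2) * / INR (S p))
    with (2 / INR (S p) * Series (fun n => esym k (S n) / rising (S n) 2)) by (unfold Rdiv; ring).
  rewrite <- !Series_scal_l.
  assert (Hterm : forall n, 0 <= INR (fact p) * (esym k (S n) / rising (S n) (S p)) <=
                            2 / INR (S p) * (esym k (S n) / rising (S n) 2)).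
  { intros n; pose proof (esym_nonneg k (S n)).
    pose proof (rising_pos (S n) (S p) ltac:(lia)); pose proof (rising_pos (S n) 2 ltac:(lia)).
    pose proof (rising_fact_le (S n) (S p) ltac:(lia) ltac:(lia)) as Hfact.
    cbn [fact] in Hfact; rewrite mult_INR in Hfact.
    pose proof (INR_fact_lt_0 p); assert (0 < INR (S p)) by (apply lt_0_INR; lia).
    split; [apply Rmult_le_pos; [lra|apply Rdiv_le_0_compat; lra]|].
    unfold Rdiv; rewrite <- !Rmult_assoc, !(Rmult_comm _ (esym k (S n))), !Rmult_assoc.
    apply Rmult_le_compat_l; [easy|].
    apply Rmult_le_reg_r with (INR (S p) * rising (S n) (S p) * rising (S n) 2);
      [apply Rmult_lt_0_compat; [apply Rmult_lt_0_compat|]; lra|].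
    replace (INR (fact p) * / rising (S n) (S p) * (INR (S p) * rising (S n) (S p) * rising (S n) 2))
      with (INR (S p) * INR (fact p) * rising (S n) 2) by (field; lra).
    replace (2 * (/ INR (S p) * / rising (S n) 2) * (INR (S p) * rising (S n) (S p) * rising (S n) 2))
      with (2 * rising (S n) (S p)) by (field; lra).
    easy. }
  assert (Hex : ex_series (fun n => 2 / INR (S p) * (esym k (S n) / rising (S n) 2))).
  { apply (ex_series_scal_l (V := R_NormedModule)), (ex_series_esym_rising k 1); lia. }
  split.
  - apply Series_nonneg; [apply Hterm|].
    refine (@ex_series_le R_AbsRing R_CompleteNormedModule _ _ _ Hex).
    intros n; specialize (Hterm n); rewrite Rabs_pos_eq; lra.
  - now apply Series_le.
Qed.

Lemma scaled_series_shift k m : (1 <= k)%nat ->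
  scaled_series k (S m) + Hr (S k) m = scaled_series k 1.
Proof.
  intros Hk; induction m as [|m IH]; cbn [Hr]; [ring|].
  rewrite <- IH, (scaled_series_rec k (S m)) by lia; ring.
Qed.

Lemma scaled_series_1 k z : (1 <= k)%nat -> Un_cv (Hr (S k)) z -> scaled_series k 1 = z.
Proof.
  intros Hk Hz.
  set (u m := scaled_series k (S m) + Hr (S k) m).
  assert (Hconst : is_lim_seq u (scaled_series k 1)).
  { apply (is_lim_seq_ext (fun _ => scaled_series k 1)); [|apply is_lim_seq_const].
    intros m; symmetry; apply scaled_series_shift, Hk. }
  assert (Hlim : is_lim_seq u (0 + z)).
  { apply is_lim_seq_plus'; [|now apply is_lim_seq_Reals].
    apply is_lim_seq_le_le with (fun _ => 0) (fun m => 2 * esym_series k 2 * / INR (S (S m))).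
    - intros m; apply scaled_series_bound; lia.
    - apply is_lim_seq_const.
    - replace 0 with (2 * esym_series k 2 * 0) by ring.
      apply is_lim_seq_mult'; [apply is_lim_seq_const|].
      apply (is_lim_seq_incr_1 (fun m => / INR (S m))), is_lim_seq_inv_INR_S. }
  apply is_lim_seq_unique in Hconst, Hlim; rewrite Hconst in Hlim.
  injection Hlim; lra.
Qed.

Theorem mainTheorem7 (k q : nat) (hk : (1 <= k)%nat) (hq : (2 <= q)%nat)
  (zeta_k1 : R) (hzeta : Un_cv (fun N => Hr (S k) N) zeta_k1) :
  infinite_sum
    (fun i => Ppoly k (fun r => Hr r (S i)) / rising (S i) q)
    (/ INR (fact (q - 1)) * (zeta_k1 - Hr (S k) (q - 2))).
Proof.
  destruct q as [|[|p]]; [lia|lia|].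
  replace (S (S p) - 1)%nat with (S p) by lia; replace (S (S p) - 2)%nat with p by lia.
  assert (Hvalue : esym_series k (S (S p)) = / INR (fact (S p)) * (zeta_k1 - Hr (S k) p)).
  { rewrite <- (scaled_series_1 k zeta_k1 hk hzeta), <- (scaled_series_shift k p hk).
    unfold scaled_series; pose proof (INR_fact_lt_0 (S p)); field; lra. }
  apply is_series_Reals; rewrite <- Hvalue.
  apply (is_series_ext (fun i => esym k (S i) / rising (S i) (S (S p)))).
  - intros i; now rewrite Ppoly_esym.
  - apply Series_correct, ex_series_esym_rising; lia.
Qed.
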